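(* Let $P$ be a subpath of $\mathrm{OPT}$ whose two end-points $p,q$ both lie to the right of a vertical line $\Gamma$, and suppose $P$ crosses $\Gamma$. Then the left-most point of $P$ (which lies to the left of $\Gamma$) is a right reflection point. (Symmetrically, with left and right exchanged.)
   Context: Instance: vertical line segments $s_1,\dots,s_n$ in $\mathbb{R}^2$, each of length $1$, with pairwise distinct $x$-coordinates; $x(\cdot),y(\cdot)$ denote coordinates. A tour is a cyclic sequence of points $p_1,\dots,p_\sigma$, each on some segment, with every segment containing at least one $p_j$; the straight segments joining consecutive points are legs; cost is total length. $\mathrm{OPT}$ is a fixed minimum-cost tour, oriented $p_1\to p_2\to\cdots\to p_\sigma\to p_1$, with the standing assumptions that no two consecutive points lie on the same segment (no leg is vertical), that no horizontal line crosses all segments, and that $\mathrm{OPT}$ is not self-crossing. For a point $p_j$ of $\mathrm{OPT}$ on segment $s$, a leg incident to $p_j$ is to the left of $s$ if it lies in the half-plane $x\le x(s)$ and to the right of $s$ if it lies in $x\ge x(s)$. $p_j$ is a left (resp. right) reflection point if both of its incident legs are to the left (resp. right) of $s$. *)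

From HB Require Import structures.
From mathcomp Require Import all_boot all_order all_algebra.
From mathcomp Require Import reals.
Set Implicit Arguments. Unset Strict Implicit. Unset Printing Implicit Defensive.
Import Order.TTheory GRing.Theory Num.Theory.
Local Open Scope ring_scope.

Section Defs.
Variable R : realType.
Notation pt := (R * R)%type.

Definition dist (p q : pt) : R :=
  Num.sqrt ((p.1 - q.1) ^+ 2 + (p.2 - q.2) ^+ 2).

Definition lerp (p q : pt) (l : R) : pt :=
  ((1 - l) * p.1 + l * q.1, (1 - l) * p.2 + l * q.2).

Definition on_seg n (sx sy : 'I_n -> R) (i : 'I_n) (p : pt) : Prop :=
  p.1 = sx i /\ sy i <= p.2 <= sy i + 1.

(* A tour is a cyclic sequence t = [p_0; ...; p_(sigma-1)] (index j taken
   mod sigma); consecutive points form the legs. *)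
Definition tpt (t : seq pt) (j : nat) : pt := nth (0, 0) t (j %% size t).

Definition is_tour n (sx sy : 'I_n -> R) (t : seq pt) : Prop :=
  (0 < size t)%N /\
  (forall j, (j < size t)%N -> exists i, on_seg sx sy i (tpt t j)) /\
  (forall i, exists j, (j < size t)%N /\ on_seg sx sy i (tpt t j)).

Definition cost (t : seq pt) : R :=
  \sum_(j < size t) dist (tpt t j) (tpt t j.+1).

(* orientation (twice the signed area) *)
Definition orient (a b c : pt) : R :=
  (b.1 - a.1) * (c.2 - a.2) - (b.2 - a.2) * (c.1 - a.1).

Definition proper_cross (a b c d : pt) : Prop :=
  orient a b c * orient a b d < 0 /\ orient c d a * orient c d b < 0.

Definition self_crossing (t : seq pt) : Prop :=
  exists j k, [/\ (j < size t)%N, (k < size t)%N &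
    proper_cross (tpt t j) (tpt t j.+1) (tpt t k) (tpt t k.+1)].

Definition leg_right_of (p q : pt) (c : R) : Prop :=
  forall l, 0 <= l <= 1 -> c <= (lerp p q l).1.
Definition leg_left_of (p q : pt) (c : R) : Prop :=
  forall l, 0 <= l <= 1 -> (lerp p q l).1 <= c.

Definition tprev (t : seq pt) (j : nat) : nat := (j + size t).-1.

Definition right_reflection n (sx sy : 'I_n -> R) (t : seq pt) (j : nat) : Prop :=
  exists i, [/\ on_seg sx sy i (tpt t j),
    leg_right_of (tpt t (tprev t j)) (tpt t j) (sx i) &
    leg_right_of (tpt t j) (tpt t j.+1) (sx i)].

Definition left_reflection n (sx sy : 'I_n -> R) (t : seq pt) (j : nat) : Prop :=
  exists i, [/\ on_seg sx sy i (tpt t j),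
    leg_left_of (tpt t (tprev t j)) (tpt t j) (sx i) &
    leg_left_of (tpt t j) (tpt t j.+1) (sx i)].

(* OPT together with the standing assumptions *)
Definition is_OPT n (sx sy : 'I_n -> R) (t : seq pt) : Prop :=
  [/\ is_tour sx sy t,
      (forall t', is_tour sx sy t' -> cost t <= cost t'),
      (forall j i, (j < size t)%N -> on_seg sx sy i (tpt t j) ->
          ~ on_seg sx sy i (tpt t j.+1)),
      ~ (exists y, forall i, sy i <= y <= sy i + 1) &
      ~ self_crossing t].

(* The subpath P of t starting at index a with L legs:
   vertices tpt t (a+m), 0 <= m <= L; a point of P is a point of one of its legs. *)
Definition subpath_point (t : seq pt) (a L : nat) (z : pt) : Prop :=
  exists m l, [/\ (m < L)%N, 0 <= l <= 1 &
    z = lerp (tpt t (a + m)) (tpt t (a + m).+1) l].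
End Defs.

From HB Require Import structures.
From mathcomp Require Import all_boot all_order all_algebra.
From mathcomp Require Import reals.
From mathcomp Require Import ring lra zify.
Import Order.TTheory GRing.Theory Num.Theory.
Local Open Scope ring_scope.

(* A subpath crossing [Gamma] reaches its left-most point at a vertex lying
   strictly left of [Gamma]; as both end-points are right of [Gamma], that
   vertex is interior, so both of its legs belong to the subpath and hence lie
   in the half plane to the right of it.  The left case is the same argument
   for the functional [-x] instead of [x]. *)

Section CyclicIndex.
Variables (R : realType) (t : seq (R * R)).

Lemma tpt_modn j : tpt t (j %% size t) = tpt t j.
Proof. by rewrite /tpt modn_mod. Qed.

Lemma tpt_modnS j : tpt t (j %% size t).+1 = tpt t j.+1.
Proof. by rewrite /tpt -addn1 modnDml addn1. Qed.

Lemma tpt_tprevS j : (0 < size t)%N -> tpt t (tprev t (j.+1 %% size t)) = tpt t j.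
Proof.
move=> t_gt0; rewrite /tprev /tpt.
have -> : ((j.+1 %% size t + size t).-1 = j.+1 %% size t + (size t).-1)%N by lia.
by rewrite modnDml (_ : j.+1 + _ = j + size t)%N ?modnDr //; lia.
Qed.

End CyclicIndex.

Definition affine_on_segments {R : realType} (f : R * R -> R) : Prop :=
  forall p q l, f (lerp p q l) = (1 - l) * f p + l * f q.

Lemma affine_fst {R : realType} : affine_on_segments (@fst R R).
Proof. by []. Qed.

Lemma affine_oppfst {R : realType} : affine_on_segments (fun p : R * R => - p.1).
Proof. by move=> p q l /=; ring. Qed.

Section ExtremeVertex.
Context {R : realType} {t : seq (R * R)} {a L : nat} {f : R * R -> R}.

Definition min_vertex (m : nat) : Prop :=
  forall z, subpath_point t a L z -> f (tpt t (a + m)) <= f z.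

Lemma exists_min_vertex :
  affine_on_segments f -> exists m, (m <= L)%N /\ min_vertex m.
Proof.
move=> f_aff.
have [m _ m_min] := @arg_minP _ R 'I_L.+1 ord0 predT
  (fun k => f (tpt t (a + k))) erefl.
exists m; split; first by rewrite -ltnS.
move=> _ [k [l [kL /andP[l0 l1] ->]]].
have le_k := m_min (@Ordinal L.+1 k (ltnW kL)) erefl.
have le_kS := m_min (@Ordinal L.+1 k.+1 kL) erefl.
rewrite f_aff -addnS; rewrite /= in le_k le_kS; nra.
Qed.

Lemma min_vertex_interior {c : R} {m : nat} :
  c < f (tpt t a) -> c < f (tpt t (a + L)) ->
  (exists z, subpath_point t a L z /\ f z < c) ->
  (m <= L)%N -> min_vertex m ->
  [/\ f (tpt t (a + m)) < c, (0 < m)%N & (m < L)%N].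
Proof.
move=> ca cL [z [Pz fz]] mL m_min.
have fm : f (tpt t (a + m)) < c by apply: le_lt_trans (m_min _ Pz) fz.
split=> //.
- by rewrite lt0n; apply: contraTneq fm => ->; rewrite addn0 -leNgt ltW.
- rewrite ltn_neqAle mL andbT.
  by apply: contraTneq fm => ->; rewrite -leNgt ltW.
Qed.

Lemma min_vertex_legs {m : nat} : (0 < size t)%N ->
  (0 < m)%N -> (m < L)%N -> min_vertex m ->
  let j := ((a + m) %% size t)%N in
  (forall l, 0 <= l <= 1 ->
     f (tpt t j) <= f (lerp (tpt t (tprev t j)) (tpt t j) l)) /\
  (forall l, 0 <= l <= 1 ->
     f (tpt t j) <= f (lerp (tpt t j) (tpt t j.+1) l)).
Proof.
move=> t_gt0 m_gt0 mL m_min j; rewrite /j tpt_modn tpt_modnS.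
split=> l l01; apply: m_min; last by exists m, l.
exists m.-1, l; split=> //; first by lia.
by rewrite (_ : a + m = (a + m.-1).+1)%N ?tpt_tprevS //; lia.
Qed.

Lemma min_vertex_reflection {c : R} {m : nat} : (0 < size t)%N ->
  c < f (tpt t a) -> c < f (tpt t (a + L)) ->
  (exists z, subpath_point t a L z /\ f z < c) ->
  (m <= L)%N -> min_vertex m ->
  let j := ((a + m) %% size t)%N in
  [/\ f (tpt t (a + m)) < c,
     forall l, 0 <= l <= 1 -> f (tpt t j) <= f (lerp (tpt t (tprev t j)) (tpt t j) l)
   & forall l, 0 <= l <= 1 -> f (tpt t j) <= f (lerp (tpt t j) (tpt t j.+1) l)].
Proof.
move=> t_gt0 ca cL cross mL m_min.
have [fm m_gt0 m_ltL] := min_vertex_interior ca cL cross mL m_min.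
by have [prev_leg next_leg] := min_vertex_legs t_gt0 m_gt0 m_ltL m_min.
Qed.

End ExtremeVertex.

Arguments min_vertex {R} t a L f m.

Theorem lemma1 (R : realType) (n : nat) (sx sy : 'I_n -> R) (t : seq (R * R)) :
  injective sx -> is_OPT sx sy t ->
  forall (a L : nat) (c : R),
    (a < size t)%N -> (0 < L)%N -> (L <= size t)%N ->
  (* right case: endpoints right of Gamma : x = c, P crosses Gamma *)
  ((c < (tpt t a).1 -> c < (tpt t (a + L)).1 ->
     (exists z, subpath_point t a L z /\ z.1 < c) ->
     (exists m, (m <= L)%N /\
        forall z, subpath_point t a L z -> (tpt t (a + m)).1 <= z.1) /\
     (forall m, (m <= L)%N ->
        (forall z, subpath_point t a L z -> (tpt t (a + m)).1 <= z.1) ->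
        (tpt t (a + m)).1 < c /\ right_reflection sx sy t ((a + m) %% size t)))
  /\
  (* symmetric left case *)
   ((tpt t a).1 < c -> (tpt t (a + L)).1 < c ->
     (exists z, subpath_point t a L z /\ c < z.1) ->
     (exists m, (m <= L)%N /\
        forall z, subpath_point t a L z -> z.1 <= (tpt t (a + m)).1) /\
     (forall m, (m <= L)%N ->
        (forall z, subpath_point t a L z -> z.1 <= (tpt t (a + m)).1) ->
        c < (tpt t (a + m)).1 /\ left_reflection sx sy t ((a + m) %% size t)))).
Proof.
move=> _ [[t_gt0 [on_some_seg _]] _ _ _ _] a L c _ _ _.
split=> [ca cL cross | ac aL cross].
- split; first exact: exists_min_vertex affine_fst.
  move=> m mL m_min.
  have [mc prev_leg next_leg] := min_vertex_reflection t_gt0 ca cL cross mL m_min.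
  have [i /[dup] [[xi _]] on_i] := on_some_seg _ (ltn_pmod (a + m) t_gt0).
  by split=> //; exists i; split=> //; rewrite -xi.
- have max_x_min_oppx m :
      (forall z, subpath_point t a L z -> z.1 <= (tpt t (a + m)).1) <->
      min_vertex t a L (fun p => - p.1) m.
    by split=> hm z /hm; rewrite lerN2.
  split.
    have [m [mL m_min]] : exists m, (m <= L)%N /\ min_vertex t a L (fun p => - p.1) m
      := exists_min_vertex affine_oppfst.
    by exists m; split=> //; apply/max_x_min_oppx.
  move=> m mL /max_x_min_oppx m_min.
  have ca' : - c < - (tpt t a).1 by rewrite ltrN2.
  have cL' : - c < - (tpt t (a + L)).1 by rewrite ltrN2.
  have cross' : exists z, subpath_point t a L z /\ - z.1 < - c.
    by case: cross => z [Pz zc]; exists z; rewrite ltrN2.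
  have [mc prev_leg next_leg] := min_vertex_reflection t_gt0 ca' cL' cross' mL m_min.
  have [i /[dup] [[xi _]] on_i] := on_some_seg _ (ltn_pmod (a + m) t_gt0).
  split; first by rewrite -ltrN2.
  exists i; split=> //; rewrite -xi => l l01.
  + by rewrite -lerN2; apply: prev_leg.
  + by rewrite -lerN2; apply: next_leg.
Qed.
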